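(* Let $(X,T)$ be a topologically transitive Cantor system and let $0<\theta<1$ be such that $\exp(2\pi i\theta)$ is a continuous eigenvalue of $T$. If $f,g\in C(X,\mathbb Z)$ are such that $f-\theta\mathbf 1$ and $g-\theta\mathbf 1$ are real coboundaries, then $f-g$ is an integer coboundary, i.e. $f-g=h-h\circ T$ for some $h\in C(X,\mathbb Z)$.
   Context: A Cantor system is a homeomorphism $T$ of a compact metric totally disconnected space $X$ without isolated points; topologically transitive means some orbit is dense. A continuous eigenvalue is $\lambda$ with $F\circ T=\lambda F$ for some continuous $F:X\to\mathbb S^1$. A real coboundary is $F-F\circ T$ with $F\in C(X,\mathbb R)$. *)

From mathcomp Require Import all_boot all_algebra all_classical all_reals all_analysis.
Import GRing.Theory Num.Theory numFieldNormedType.Exports.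
Local Open Scope classical_set_scope.
Local Open Scope ring_scope.

Definition Zdisc := discrete_topology int.

Definition is_cantor_space {R : realType} (X : pseudoMetricType R) : Prop :=
  [/\ compact [set: X], hausdorff_space X, totally_disconnected [set: X]
    & forall x : X, ~ isolated [set: X] x].

Definition is_homeomorphism {X : topologicalType} (T : X -> X) : Prop :=
  continuous T /\ exists S : X -> X, [/\ continuous S, cancel T S & cancel S T].

Definition full_orbit {X : Type} (T : X -> X) (x : X) : set X :=
  [set y | exists n : nat, iter n T x = y \/ iter n T y = x].

Definition topologically_transitive {X : topologicalType} (T : X -> X) : Prop :=
  exists x : X, dense (full_orbit T x).

(** exp(2 pi i theta) is a continuous eigenvalue of T: there is a continuous
    F : X -> S^1 (S^1 viewed as the unit circle in C = R x R) with
    F (T x) = exp(2 pi i theta) * F x (complex multiplication written out). *)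
Definition continuous_eigenvalue_angle {R : realType} {X : topologicalType}
    (T : X -> X) (theta : R) : Prop :=
  exists F : X -> R * R,
    [/\ continuous F,
        forall x, (F x).1 ^+ 2 + (F x).2 ^+ 2 = 1
      & forall x, F (T x) =
          (cos (2 * pi * theta) * (F x).1 - sin (2 * pi * theta) * (F x).2,
           sin (2 * pi * theta) * (F x).1 + cos (2 * pi * theta) * (F x).2)].

Definition real_coboundary {R : realType} {X : topologicalType}
    (T : X -> X) (u : X -> R) : Prop :=
  exists F : X -> R, continuous F /\ forall x, u x = F x - F (T x).

Definition int_coboundary {X : topologicalType} (T : X -> X) (u : X -> int) : Prop :=
  exists h : X -> Zdisc, continuous h /\ forall x, u x = h x - h (T x).

From mathcomp Require Import all_boot all_algebra all_classical all_reals all_analysis.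
From mathcomp Require Import zify lra.
Import order.Order.TTheory GRing.Theory Num.Theory numFieldNormedType.Exports.
Local Open Scope classical_set_scope.
Local Open Scope ring_scope.

(* Subtracting the two transfer functions gives f - g = H - H o T with H
   continuous and real valued.  Along the full orbit of a point x0 with dense
   orbit, H - H x0 telescopes into finite sums of values of f - g, so it is an
   integer there; by continuity and density it is integer valued everywhere,
   hence locally constant, and its floor is a continuous integer transfer
   function. *)

Lemma intr_inj_dist_lt1 (R : realDomainType) (m n : int) :
  `|m%:~R - n%:~R : R| < 1 -> m = n.
Proof.
rewrite -intrB -intr_norm -[1 : R]/((1 : int)%:~R) ltr_int.
by move=> /ltr_normlP [? ?]; lia.
Qed.

Lemma int_num_approx (R : realType) (a : R) :
  (forall eps, 0 < eps -> exists m : int, `|a - m%:~R| < eps) ->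
  a \is a Num.int.
Proof.
move=> approx; have [m ham] := approx (1 / 2) ltac:(lra).
apply/intrP; exists m; apply/eqP/negPn/negP => /eqP ne_am.
have dist_gt0 : 0 < `|a - m%:~R| by rewrite normr_gt0 subr_eq0; apply/eqP.
have [n] := approx (Num.min `|a - m%:~R| (1 / 2)) ltac:(rewrite lt_min dist_gt0; lra).
rewrite lt_min => /andP [han1 han2].
suff mn : m = n by move: han1; rewrite mn ltxx.
apply: intr_inj_dist_lt1 (R) _ _ _.
have := ler_normB (a - n%:~R) (a - m%:~R).
have -> : a - n%:~R - (a - m%:~R) = m%:~R - n%:~R :> R by lra.
lra.
Qed.

Lemma int_num_dense_continuous (R : realType) (X : topologicalType)
    (K : X -> R) (D : set X) :
  continuous K -> dense D -> (forall z, D z -> K z \is a Num.int) ->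
  forall y, K y \is a Num.int.
Proof.
move=> cK dD KD y; apply: int_num_approx => eps eps_gt0.
have near_y : \forall z \near y, `|K y - K z| < eps.
  exact: cvgr_dist_lt (cK y) _ eps_gt0.
have [z [zi Dz]] := dD _ (ex_intro _ y near_y) (@open_interior _ _).
have /intrP [m Kz] := KD z Dz; exists m; rewrite -Kz; exact: interior_subset zi.
Qed.

Lemma continuous_floor_int_num (R : realType) (X : topologicalType) (K : X -> R) :
  continuous K -> (forall y, K y \is a Num.int) ->
  continuous (fun y => Num.floor (K y) : Zdisc).
Proof.
move=> cK Kint y; apply/discrete_cvg.
have half_gt0 : 0 < 1 / 2 :> R by lra.
have near_y : \forall z \near y, `|K y - K z| < 1 / 2.
  exact: cvgr_dist_lt (cK y) _ half_gt0.
apply: filterS near_y => z Kyz /=; apply: esym; apply: intr_inj_dist_lt1 (R) _ _ _.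
by rewrite !floorK ?Kint //; lra.
Qed.

Section CoboundaryAlongOrbits.
Variables (R : realType) (X : Type) (T : X -> X) (d : X -> int) (H : X -> R).
Hypothesis dH : forall x, (d x)%:~R = H x - H (T x).

Lemma coboundary_iter_int_num n x : H x - H (iter n T x) \is a Num.int.
Proof.
elim: n => [|n IHn] /=; first by rewrite subrr int_num0.
have -> : H x - H (T (iter n T x)) =
    (H x - H (iter n T x)) + (H (iter n T x) - H (T (iter n T x))) by lra.
by rewrite rpredD // -dH intr_int.
Qed.

Lemma full_orbit_int_num x0 z : full_orbit T x0 z -> H z - H x0 \is a Num.int.
Proof.
move=> [n [<-|<-]]; last exact: coboundary_iter_int_num.
by rewrite -opprB rpredN coboundary_iter_int_num.
Qed.

End CoboundaryAlongOrbits.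

Lemma real_coboundaryB {R : realType} {X : topologicalType} {T : X -> X}
    {u v : X -> R} :
  real_coboundary T u -> real_coboundary T v ->
  real_coboundary T (fun x => u x - v x).
Proof.
move=> [F [cF uF]] [G [cG vG]].
exists (fun x => F x - G x); split; first by move=> x; exact: cvgB (cF x) (cG x).
by move=> x; rewrite uF vG; lra.
Qed.

Theorem transitive_int_valued_coboundary (R : realType) (X : topologicalType)
    (T : X -> X) (d : X -> int) :
  topologically_transitive T -> real_coboundary T (fun x => (d x)%:~R : R) ->
  int_coboundary T d.
Proof.
move=> [x0 dense_orbit] [H [cH dH]].
pose K y := H y - H x0.
have cK : continuous K by move=> y; exact: cvgB (cH y) (cvg_cst _).
have Kint : forall y, K y \is a Num.int.
  by apply: int_num_dense_continuous cK dense_orbit _; exact: full_orbit_int_num.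
exists (fun y => Num.floor (K y)); split; first exact: continuous_floor_int_num.
move=> x; apply: (@intr_inj R).
by rewrite intrB !floorK ?Kint // dH /K; lra.
Qed.

Theorem mainTheorem8 (R : realType) (X : pseudoMetricType R) (T : X -> X)
    (theta : R) (f g : X -> Zdisc) :
  is_cantor_space X -> is_homeomorphism T -> topologically_transitive T ->
  0 < theta < 1 -> continuous_eigenvalue_angle T theta ->
  continuous f -> continuous g ->
  real_coboundary T (fun x => (f x)%:~R - theta) ->
  real_coboundary T (fun x => (g x)%:~R - theta) ->
  int_coboundary T (fun x => f x - g x).
Proof.
move=> _ _ transT _ _ _ _ cob_f cob_g.
apply: (transitive_int_valued_coboundary R X T _ transT).
have [H [cH fgH]] := real_coboundaryB cob_f cob_g.
exists H; split; first exact: cH.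
by move=> x; rewrite -fgH intrB opprB addrA subrK.
Qed.
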